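(* If $L$ is a d-reduced $\kappa$-frame, then for every $a\in L$ the congruence $\nabla_a$ is clear; equivalently, $L/\nabla_a$ is d-reduced.
   Context: $\kappa$ is a fixed regular cardinal; a $\kappa$-frame is a bounded distributive lattice having joins of all subsets of cardinality $<\kappa$ and satisfying the frame distributive law for such joins. A $\kappa$-ideal is a downset in which every subset of cardinality $<\kappa$ has an upper bound. A congruence is an equivalence relation that is a sub-$\kappa$-frame of $L\times L$. $\nabla_a=\{(x,y)\mid x\vee a=y\vee a\}$. For a $\kappa$-ideal $I$, $\partial_I=\{(a,b)\mid\forall x\in L:\ a\wedge x\in I\iff b\wedge x\in I\}$; a congruence is clear if it equals $\partial_I$ for some $\kappa$-ideal $I$. A $\kappa$-frame $M$ is d-reduced if $\mathfrak{D}_M=\{(a,b)\mid\forall x\in M:\ a\wedge x=0\iff b\wedge x=0\}$ is the diagonal. *)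

From Stdlib Require Import Classical.

(** * The regular cardinal kappa
    kappa is represented by a type [K] whose cardinality is kappa.
    A type [X] has cardinality < kappa iff it injects into [K] but
    does not surject onto [K]. *)

Definition injective {A B : Type} (f : A -> B) : Prop :=
  forall x y, f x = f y -> x = y.
Definition surjective {A B : Type} (f : A -> B) : Prop :=
  forall y, exists x, f x = y.

Definition card_lt (X K : Type) : Prop :=
  (exists f : X -> K, injective f) /\ ~ (exists g : X -> K, surjective g).

Definition regular_cardinal (K : Type) : Prop :=
  (exists f : nat -> K, injective f) /\
  (forall (I : Type) (F : I -> Type),
      card_lt I K -> (forall i, card_lt (F i) K) -> card_lt {i : I & F i} K).

Definition small (K : Type) {T : Type} (S : T -> Prop) : Prop :=
  card_lt {x : T | S x} K.

(** * kappa-frames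
    A bounded lattice (given as a partial order with binary meets/joins,
    top and bottom) with a join operation [sup] which is required to be the
    least upper bound on every subset of cardinality < kappa (its value on
    large subsets is irrelevant), satisfying the frame distributive law
    [a /\ sup S = sup {a /\ s | s in S}] for such subsets.  (Distributivity
    of the lattice follows from this law applied to 2-element subsets.) *)
Record kFrame (K : Type) := KFrame {
  car :> Type;
  le : car -> car -> Prop;
  meet : car -> car -> car;
  join : car -> car -> car;
  top : car;
  bot : car;
  sup : (car -> Prop) -> car;
  le_refl : forall x, le x x;
  le_trans : forall x y z, le x y -> le y z -> le x z;
  le_antisym : forall x y, le x y -> le y x -> x = y;
  meet_glb : forall x y z, le z (meet x y) <-> (le z x /\ le z y);
  join_lub : forall x y z, le (join x y) z <-> (le x z /\ le y z);
  top_max : forall x, le x top;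
  bot_min : forall x, le bot x;
  sup_ub : forall S, small K S -> forall s, S s -> le s (sup S);
  sup_least : forall S, small K S -> forall u, (forall s, S s -> le s u) -> le (sup S) u;
  frame_distr : forall (a : car) (S : car -> Prop), small K S ->
      meet a (sup S) = sup (fun y => exists s, S s /\ y = meet a s)
}.

Arguments le {K} _ _ _.
Arguments meet {K} _ _ _.
Arguments join {K} _ _ _.
Arguments top {K} _.
Arguments bot {K} _.
Arguments sup {K} _ _.

Section Defs.
Context {K : Type} (L : kFrame K).

(** A congruence: an equivalence relation that is a sub-kappa-frame of L x L
    (contains (0,0) and (1,1), closed under binary meets and joins, and under
    joins of subsets of cardinality < kappa, computed componentwise). *)
Definition congruence (th : L -> L -> Prop) : Prop :=
  (forall x, th x x) /\
  (forall x y, th x y -> th y x) /\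
  (forall x y z, th x y -> th y z -> th x z) /\
  th (bot L) (bot L) /\ th (top L) (top L) /\
  (forall a b c d, th a b -> th c d -> th (meet L a c) (meet L b d)) /\
  (forall a b c d, th a b -> th c d -> th (join L a c) (join L b d)) /\
  (forall S : L * L -> Prop, small K S -> (forall p, S p -> th (fst p) (snd p)) ->
     th (sup L (fun x => exists p, S p /\ x = fst p))
        (sup L (fun y => exists p, S p /\ y = snd p))).

Definition nabla (a : L) : L -> L -> Prop :=
  fun x y => join L x a = join L y a.

Definition kIdeal (I : L -> Prop) : Prop :=
  (forall x y, le L x y -> I y -> I x) /\
  (forall S : L -> Prop, small K S -> (forall s, S s -> I s) ->
     exists u, I u /\ forall s, S s -> le L s u).

Definition partialI (I : L -> Prop) : L -> L -> Prop :=
  fun a b => forall x, I (meet L a x) <-> I (meet L b x).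

Definition clear (th : L -> L -> Prop) : Prop :=
  congruence th /\
  exists I, kIdeal I /\ forall a b, th a b <-> partialI I a b.

(** D_L = {(a,b) | forall x, a /\ x = 0 <-> b /\ x = 0}; L is d-reduced if
    D_L is the diagonal. *)
Definition dReduced : Prop :=
  forall a b, (forall x, meet L a x = bot L <-> meet L b x = bot L) -> a = b.

(** d-reducedness of the quotient L / nabla_a, written on representatives:
    the classes are [x] with [x] = [y] iff x \/ a = y \/ a, meets are computed
    on representatives and the bottom class is [0], so [b] /\ [x] = [0] iff
    (b /\ x) \/ a = 0 \/ a. *)
Definition quotient_nabla_dReduced (a : L) : Prop :=
  forall b c,
    (forall x, nabla a (meet L b x) (bot L) <-> nabla a (meet L c x) (bot L)) ->
    nabla a b c.

End Defs.

(* Relative to the downset I of a, the congruence partial_I relates b and c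
   iff b /\ x <= a <-> c /\ x <= a for all x.  Distributivity gives
   (b \/ a) /\ x <= (b /\ x) \/ a, so nabla_a is contained in partial_I.
   Conversely, if b and c are partial_I-related then b \/ a and c \/ a have
   the same pseudocomplementary behaviour, so d-reducedness forces
   b \/ a = c \/ a.  The quotient L / nabla_a is d-reduced for the same
   reason, since [b] /\ [x] = [0] there exactly when b /\ x <= a. *)

From Stdlib Require Import Classical ClassicalEpsilon.

Lemma sig_proj1_inj {A : Type} (P : A -> Prop) (u v : {x | P x}) :
  proj1_sig u = proj1_sig v -> u = v.
Proof. exact (eq_sig_hprop (fun x => proof_irrelevance (P x)) u v). Qed.

Lemma card_lt_injective (X Y K : Type) (k0 : K) (i : X -> Y) :
  injective i -> card_lt Y K -> card_lt X K.
Proof.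
  intros inj_i [[f inj_f] no_surj]. split.
  - exists (fun x => f (i x)). intros x y E. apply inj_i, inj_f, E.
  - intros [g surj_g]. apply no_surj.
    exists (fun y => match excluded_middle_informative (exists x, i x = y) with
             | left e => g (proj1_sig (constructive_indefinite_description _ e))
             | right _ => k0 end).
    intro k. destruct (surj_g k) as [x <-]. exists (i x).
    destruct (excluded_middle_informative (exists x', i x' = i x)) as [e|n].
    + destruct (constructive_indefinite_description _ e) as [x' E]; simpl.
      rewrite (inj_i _ _ E). reflexivity.
    + exfalso. apply n. exists x. reflexivity.
Qed.

Section SmallSets.
Variable K : Type.
Hypothesis HK : regular_cardinal K.

Lemma card_lt_bool : card_lt bool K.
Proof.
  destruct HK as [[f inj_f] _]. split.
  - exists (fun b : bool => f (if b then 0 else 1)).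
    intros [] [] E; auto; apply inj_f in E; discriminate.
  - intros [g surj_g].
    destruct (surj_g (f 0)) as [b0 E0], (surj_g (f 1)) as [b1 E1],
      (surj_g (f 2)) as [b2 E2].
    (* pigeonhole: two of b0, b1, b2 coincide *)
    destruct b0, b1, b2;
      first [ assert (E : f 0 = f 1) by congruence
            | assert (E : f 0 = f 2) by congruence
            | assert (E : f 1 = f 2) by congruence ];
      apply inj_f in E; discriminate.
Qed.

Lemma small_sub_pair (T : Type) (u v : T) (S : T -> Prop) :
  (forall y, S y -> y = u \/ y = v) -> small K S.
Proof.
  intros Huv. destruct HK as [[f _] _].
  apply (card_lt_injective _ _ _ (f 0)
           (fun p : {y | S y} =>
              if excluded_middle_informative (proj1_sig p = u) then true else false));
    [|exact card_lt_bool].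
  intros [x Sx] [y Sy]; simpl.
  destruct (excluded_middle_informative (x = u)), (excluded_middle_informative (y = u));
    intros E; try discriminate; apply sig_proj1_inj; simpl; [congruence|].
  destruct (Huv x Sx), (Huv y Sy); congruence.
Qed.

Lemma small_image (A B : Type) (S : A -> Prop) (F : A -> B) :
  small K S -> small K (fun y => exists s, S s /\ y = F s).
Proof.
  intros small_S. destruct HK as [[f _] _].
  set (pre := fun t : {y | exists s, S s /\ y = F s} =>
                constructive_indefinite_description _ (proj2_sig t)).
  apply (card_lt_injective _ _ _ (f 0)
           (fun t => exist S (proj1_sig (pre t)) (proj1 (proj2_sig (pre t)))));
    [|exact small_S].
  intros t t' E. apply (f_equal (@proj1_sig _ _)) in E; simpl in E.
  apply sig_proj1_inj.
  rewrite (proj2 (proj2_sig (pre t))), (proj2 (proj2_sig (pre t'))), E.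
  reflexivity.
Qed.

End SmallSets.

Section FrameLemmas.
Variable K : Type.
Hypothesis HK : regular_cardinal K.
Variable L : kFrame K.

Notation "x <= y" := (le L x y).
Notation "x /\' y" := (meet L x y) (at level 40, left associativity).
Notation "x \/' y" := (join L x y) (at level 50, left associativity).

Lemma le_meet_l (x y : L) : x /\' y <= x.
Proof. apply (proj1 (meet_glb K L x y _) (le_refl K L _)). Qed.

Lemma le_meet_r (x y : L) : x /\' y <= y.
Proof. apply (proj1 (meet_glb K L x y _) (le_refl K L _)). Qed.

Lemma le_join_l (x y : L) : x <= x \/' y.
Proof. apply (proj1 (join_lub K L x y _) (le_refl K L _)). Qed.

Lemma le_join_r (x y : L) : y <= x \/' y.
Proof. apply (proj1 (join_lub K L x y _) (le_refl K L _)). Qed.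

Lemma le_meetI (x y z : L) : z <= x -> z <= y -> z <= x /\' y.
Proof. intros; apply meet_glb; auto. Qed.

Lemma le_joinI (x y z : L) : x <= z -> y <= z -> x \/' y <= z.
Proof. intros; apply join_lub; auto. Qed.

Lemma meetC (x y : L) : x /\' y = y /\' x.
Proof. apply le_antisym; apply le_meetI; auto using le_meet_l, le_meet_r. Qed.

Lemma le_join2 (x y x' y' : L) : x <= x' -> y <= y' -> x \/' y <= x' \/' y'.
Proof.
  intros. apply le_joinI; eapply le_trans; eauto using le_join_l, le_join_r.
Qed.

Lemma join_eq_r (y a : L) : y \/' a = a <-> y <= a.
Proof.
  split.
  - intros E. rewrite <- E. apply le_join_l.
  - intros H. apply le_antisym; [apply le_joinI; auto using le_refl | apply le_join_r].
Qed.

Lemma le_meet_join_distr (x y z : L) : x /\' (y \/' z) <= (x /\' y) \/' (x /\' z).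
Proof.
  set (S := fun s : L => s = y \/ s = z).
  assert (small_S : small K S) by (apply (small_sub_pair K HK _ y z); auto).
  assert (le_sup : y \/' z <= sup L S).
  { apply le_joinI; apply sup_ub; unfold S; auto. }
  eapply le_trans.
  - apply le_meetI; [apply le_meet_l|]. eapply le_trans; [apply le_meet_r|exact le_sup].
  - rewrite frame_distr by exact small_S. apply sup_least.
    + apply (small_sub_pair K HK _ (x /\' y) (x /\' z)).
      intros w [s [[-> | ->] ->]]; auto.
    + intros w [s [[-> | ->] ->]]; [apply le_join_l | apply le_join_r].
Qed.

Lemma le_meet_join_absorb (b a x : L) : (b \/' a) /\' x <= (b /\' x) \/' a.
Proof.
  rewrite meetC. eapply le_trans; [apply le_meet_join_distr|].
  rewrite (meetC x b). apply le_join2; [apply le_refl | apply le_meet_r].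
Qed.

Lemma le_meet_join_r (c e a : L) : (c \/' a) /\' (e \/' a) <= (c /\' e) \/' a.
Proof.
  eapply le_trans; [apply le_meet_join_absorb|].
  apply le_joinI; [|apply le_join_r].
  rewrite meetC. eapply le_trans; [apply le_meet_join_absorb|].
  rewrite meetC. apply le_refl.
Qed.

Section Nabla.
Variable a : L.

Lemma nablaP (b c : L) : nabla L a b c <-> b <= c \/' a /\ c <= b \/' a.
Proof.
  unfold nabla. split.
  - intros E. rewrite <- E. split; [apply le_join_l|]. rewrite E. apply le_join_l.
  - intros [Hb Hc]. apply le_antisym; apply le_joinI; auto using le_join_r.
Qed.

Lemma nabla_sym (b c : L) : nabla L a b c -> nabla L a c b.
Proof. unfold nabla; auto. Qed.

Lemma nabla_meet (b c d e : L) :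
  nabla L a b c -> nabla L a d e -> nabla L a (b /\' d) (c /\' e).
Proof.
  assert (half : forall b c d e, b <= c \/' a -> d <= e \/' a -> b /\' d <= c /\' e \/' a).
  { intros b' c' d' e' Hb Hd. eapply le_trans; [|apply le_meet_join_r].
    apply le_meetI.
    - eapply le_trans; [apply le_meet_l | exact Hb].
    - eapply le_trans; [apply le_meet_r | exact Hd]. }
  rewrite !nablaP. intros [Hb Hc] [Hd He]. split; apply half; assumption.
Qed.

Lemma nabla_join (b c d e : L) :
  nabla L a b c -> nabla L a d e -> nabla L a (b \/' d) (c \/' e).
Proof.
  assert (half : forall b c d e, b <= c \/' a -> d <= e \/' a -> b \/' d <= c \/' e \/' a).
  { intros b' c' d' e' Hb Hd. apply le_joinI.
    - eapply le_trans; [exact Hb|]. apply le_join2; [apply le_join_l | apply le_refl].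
    - eapply le_trans; [exact Hd|]. apply le_join2; [apply le_join_r | apply le_refl]. }
  rewrite !nablaP. intros [Hb Hc] [Hd He]. split; apply half; assumption.
Qed.

Lemma le_sup_image_join (S : L * L -> Prop) (f g : L * L -> L) :
  small K S -> (forall p, S p -> f p <= g p \/' a) ->
  sup L (fun x => exists p, S p /\ x = f p) <= sup L (fun y => exists p, S p /\ y = g p) \/' a.
Proof.
  intros small_S H. apply sup_least; [exact (small_image K HK _ _ S f small_S)|].
  intros s [p [Sp ->]]. eapply le_trans; [exact (H p Sp)|].
  apply le_join2; [|apply le_refl].
  apply sup_ub; [exact (small_image K HK _ _ S g small_S) | exists p; auto].
Qed.

Lemma nabla_congruence : congruence L (nabla L a).
Proof.
  unfold congruence.
  repeat split; unfold nabla; try congruence.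
  - exact nabla_meet.
  - exact nabla_join.
  - intros S small_S H. apply nablaP.
    split; apply le_sup_image_join; auto; intros p Sp;
      destruct (proj1 (nablaP _ _) (H p Sp)); assumption.
Qed.

Lemma kIdeal_downset : kIdeal L (fun x => x <= a).
Proof.
  split.
  - intros x y Hxy Hy. eapply le_trans; eauto.
  - intros S _ H. exists a. split; [apply le_refl | exact H].
Qed.

Lemma nabla_le_meet (b c x : L) : nabla L a b c -> b /\' x <= a -> c /\' x <= a.
Proof.
  intros E H. eapply le_trans.
  - apply le_meetI; [eapply le_trans; [apply le_meet_l | apply le_join_l] | apply le_meet_r].
  - unfold nabla in E. rewrite <- E.
    eapply le_trans; [apply le_meet_join_absorb|]. apply le_joinI; auto using le_refl.
Qed.

Lemma nabla_partialI (b c : L) : nabla L a b c -> partialI L (fun x => x <= a) b c.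
Proof. intros E x. split; apply nabla_le_meet; auto using nabla_sym. Qed.

Lemma join_disjoint_of_le_meet (b c x : L) :
  (forall y, b /\' y <= a -> c /\' y <= a) ->
  (b \/' a) /\' x = bot L -> (c \/' a) /\' x = bot L.
Proof.
  intros H E. apply le_antisym; [|apply bot_min]. rewrite <- E.
  assert (ax : a /\' x <= (b \/' a) /\' x).
  { apply le_meetI; [eapply le_trans; [apply le_meet_l | apply le_join_r] | apply le_meet_r]. }
  assert (cx : c /\' x <= a).
  { apply H. eapply le_trans; [|apply bot_min]. rewrite <- E.
    apply le_meetI; [eapply le_trans; [apply le_meet_l | apply le_join_l] | apply le_meet_r]. }
  eapply le_trans; [|exact ax]. apply le_meetI; [|apply le_meet_r].
  eapply le_trans; [apply le_meet_join_absorb|]. apply le_joinI; auto using le_refl.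
Qed.

Lemma partialI_nabla (b c : L) :
  dReduced L -> partialI L (fun x => x <= a) b c -> nabla L a b c.
Proof.
  intros dR H. apply dR. intros x.
  split; apply join_disjoint_of_le_meet; intros y; apply H.
Qed.

Lemma nabla_bot (y : L) : nabla L a y (bot L) <-> y <= a.
Proof.
  unfold nabla. rewrite (proj2 (join_eq_r (bot L) a) (bot_min K L a)). apply join_eq_r.
Qed.

End Nabla.
End FrameLemmas.

Theorem mainTheorem17 (K : Type) (HK : regular_cardinal K) (L : kFrame K) :
  dReduced L ->
  forall a : L, clear L (nabla L a) /\ quotient_nabla_dReduced L a.
Proof.
  intros dR a. split.
  - split; [exact (nabla_congruence K HK L a)|].
    exists (fun x => le L x a). split; [exact (kIdeal_downset K L a)|].
    intros b c. split; [apply nabla_partialI | apply partialI_nabla]; auto.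
  - intros b c H. apply partialI_nabla; auto.
    intros x. rewrite <- !nabla_bot. apply H.
Qed.
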